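(* Let $k\in\mathbb N$, $R\ge 1$, let $W(k,R)=B^{\omega_k}_R(e)\cap\mathcal B^{\mathbb C}_{TM}$, and let $N\in\mathbb N$ satisfy $8R<2^{N-k}$. Then for all $a,b\in W(k,R)$ the elements $a\cdot b$ and $a^{-1}$ lie in $\mathbb C^{\mathcal T_0}(\omega_N)$, and the maps $$\mu^R_k\colon W(k,R)\times W(k,R)\to\mathbb C^{\mathcal T_0}(\omega_N),\ (a,b)\mapsto a\cdot b,\qquad \iota^R_k\colon W(k,R)\to\mathbb C^{\mathcal T_0}(\omega_N),\ a\mapsto a^{-1}$$ are continuous, where $W(k,R)$ carries the topology of the norm $\|\cdot\|_{\omega_k}$ and the target the topology of $\|\cdot\|_{\omega_N}$.
   Context: $\mathcal T$ is the set of rooted trees (finite, at least one vertex, up to root-preserving isomorphism), $\mathcal T_0=\mathcal T\cup\{\emptyset\}$, $|\tau|$ the number of vertices. Ordered subtrees $\mathrm{OST}(\tau)$: subsets $s$ of the vertices of $\tau$ connected by edges of $\tau$ and containing the root if nonempty; $s_\tau$ the induced rooted tree; $\tau\setminus s$ the forest left after deleting $s$ and adjacent edges. Partitions $\mathcal P(\tau)$: subsets $p$ of edges; $\tau\setminus p$ the forest left after deleting these edges; $\#(\tau\setminus p)$ its number of trees. For a forest $\mathcal F$, $a(\mathcal F)=\prod_{\theta\in\mathcal F}a(\theta)$. The complex Butcher group $G^{\mathbb C}_{TM}=\{a\colon\mathcal T_0\to\mathbb C\mid a(\emptyset)=1\}$ has product $(a\cdot b)(\tau)=\sum_{s\in\mathrm{OST}(\tau)}b(s_\tau)a(\tau\setminus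 s)$, inverse $a^{-1}(\tau)=\sum_{p\in\mathcal P(\tau)}(-1)^{\#(\tau\setminus p)}a(\tau\setminus p)$ and unit $e$ ($e(\emptyset)=1$, else $0$). $\mathcal B^{\mathbb C}_{TM}=\{a\in G^{\mathbb C}_{TM}\mid\exists C,K>0\ \forall\tau\in\mathcal T:\ |a(\tau)|\le CK^{|\tau|}\}$. For $k\in\mathbb N$, $\omega_k(\tau)=2^{-k|\tau|}$, $\mathbb C^{\mathcal T_0}(\omega_k)=\{a\colon\mathcal T_0\to\mathbb C\mid\|a\|_{\omega_k}:=\sup_\tau|a(\tau)|\omega_k(\tau)<\infty\}$, and $B^{\omega_k}_R(x)$ is the open ball of radius $R$ about $x$ in this Banach space. *)

From Stdlib Require Import Reals List Permutation.
Import ListNotations.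
Open Scope R_scope.

Definition C : Type := (R * R)%type.
Definition C0 : C := (0, 0).
Definition C1 : C := (1, 0).
Definition Cadd (x y : C) : C := (fst x + fst y, snd x + snd y).
Definition Copp (x : C) : C := (- fst x, - snd x).
Definition Csub (x y : C) : C := Cadd x (Copp y).
Definition Cmul (x y : C) : C :=
  (fst x * fst y - snd x * snd y, fst x * snd y + snd x * fst y).
Definition Cmod (x : C) : R := sqrt (fst x ^ 2 + snd x ^ 2).
Definition Csum (l : list C) : C := fold_right Cadd C0 l.
Definition Cprod (l : list C) : C := fold_right Cmul C1 l.

(** Rooted trees in the paper are taken up to
    root-preserving isomorphism; this is handled by the relation [tree_iso]
    and by requiring elements of the Butcher group to be iso-invariant. *)
Inductive tree : Type := Node : list tree -> tree.

Inductive tree_iso : tree -> tree -> Prop :=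
| iso_node (l1 l l2 : list tree) :
    Permutation l1 l -> Forall2 tree_iso l l2 -> tree_iso (Node l1) (Node l2).

Fixpoint tsize (t : tree) : nat :=
  match t with
  | Node l => S ((fix go (l : list tree) : nat :=
                    match l with [] => 0%nat | c :: l' => (tsize c + go l')%nat end) l)
  end.

(** [T0] : trees together with the empty tree [None]. *)
Definition T0 : Type := option tree.
Definition tsize0 (t : T0) : nat := match t with None => 0%nat | Some t => tsize t end.

Fixpoint combine_choices (opts : list (list (list tree * list tree)))
  : list (list tree * list tree) :=
  match opts with
  | [] => [([], [])]
  | o :: os =>
      flat_map (fun x => map (fun r => (fst x ++ fst r, snd x ++ snd r))
                             (combine_choices os)) o
  end.

(** Nonempty ordered subtrees of [t]: each entry is the pair
    (s_t, t \ s) = (induced rooted tree on s, forest left after deleting s).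
    A nonempty OST contains the root and, for each child c, either no vertex
    of the subtree at c (then that whole subtree is left in the forest), or a
    nonempty OST of the subtree at c. *)
Fixpoint ost_ne (t : tree) : list (tree * list tree) :=
  match t with
  | Node l =>
      map (fun p => (Node (fst p), snd p))
        (combine_choices
           (map (fun c => ([], [c]) :: map (fun q => ([fst q], snd q)) (ost_ne c)) l))
  end.

Definition ost (t : tree) : list (T0 * list tree) :=
  (None, [t]) :: map (fun p => (Some (fst p), snd p)) (ost_ne t).

(** Partitions (subsets of edges) of [t]: each entry is the forest t \ p,
    given as (component containing the root, other components).  For each
    child c, the edge root--c is either kept or deleted, and the subtree at c
    is partitioned recursively. *)
Fixpoint partitions (t : tree) : list (tree * list tree) :=
  match t with
  | Node l =>
      map (fun p => (Node (fst p), snd p))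
        (combine_choices
           (map (fun c =>
                   flat_map (fun q => [([fst q], snd q); ([], fst q :: snd q)])
                            (partitions c)) l))
  end.

Definition forest_eval (a : T0 -> C) (F : list tree) : C :=
  Cprod (map (fun th => a (Some th)) F).

Definition in_GTM (a : T0 -> C) : Prop :=
  a None = C1 /\ forall t1 t2, tree_iso t1 t2 -> a (Some t1) = a (Some t2).

Definition unitG : T0 -> C := fun t => match t with None => C1 | Some _ => C0 end.

Definition bmul (a b : T0 -> C) : T0 -> C :=
  fun t => match t with
           | None => Cmul (b None) (forest_eval a [])
           | Some tau => Csum (map (fun p => Cmul (b (fst p)) (forest_eval a (snd p))) (ost tau))
           end.

Definition sign_pow (n : nat) : C := ((-1) ^ n, 0).

Definition binv (a : T0 -> C) : T0 -> C :=
  fun t => match t with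
           | None => Cmul (sign_pow 0) (forest_eval a [])
           | Some tau =>
               Csum (map (fun p => Cmul (sign_pow (length (fst p :: snd p)))
                                        (forest_eval a (fst p :: snd p)))
                         (partitions tau))
           end.

Definition in_BTM (a : T0 -> C) : Prop :=
  in_GTM a /\
  exists Cc K, 0 < Cc /\ 0 < K /\
    forall tau : tree, Cmod (a (Some tau)) <= Cc * K ^ (tsize tau).

Definition omega (k : nat) (t : T0) : R := (/ 2) ^ (k * tsize0 t).

Definition in_weighted (k : nat) (a : T0 -> C) : Prop :=
  exists M, forall t : T0, Cmod (a t) * omega k t <= M.

Definition norm_lt (k : nat) (a : T0 -> C) (r : R) : Prop :=
  exists r', r' < r /\ forall t : T0, Cmod (a t) * omega k t <= r'.

Definition dist_lt (k : nat) (a b : T0 -> C) (r : R) : Prop :=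
  norm_lt k (fun t => Csub (a t) (b t)) r.

Definition W (k : nat) (Rad : R) (a : T0 -> C) : Prop :=
  dist_lt k a unitG Rad /\ in_BTM a.

From Pilot Require Import Defs.
From Stdlib Require Import Reals ZArith Lia Lra List.
From Coquelicot Require Complex.
Import ListNotations.
Open Scope R_scope.

(* Under [omega k], every [a] in [W k R] is at most [R] on trees, so [a(F)] is
   at most [R^#F] under the product weight of a forest [F].  The product and
   the inverse at a tree [t] are sums of at most [2^|t|] terms over ordered
   subtrees or partitions, each at most [R^(|t|+1)]; hence their weighted values
   are at most [R (2R)^|t|], and a telescoping estimate bounds the differences
   by [2 R d (4R)^|t|] for [d]-close arguments.  The extra decay
   [2^(-(N-k)|t|) <= (8R)^(-|t|)] of [omega N] absorbs these geometric factors,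
   so both maps are even Lipschitz from [omega k] to [omega N]. *)

Fixpoint tree_nested_ind (P : tree -> Prop)
    (HP : forall l, Forall P l -> P (Node l)) (t : tree) : P t :=
  match t with
  | Node l => HP l ((fix go (l : list tree) : Forall P l :=
                       match l with
                       | [] => Forall_nil _
                       | c :: l' => Forall_cons _ (tree_nested_ind P HP c) (go l')
                       end) l)
  end.

Section TreeCombinatorics.
Local Open Scope nat_scope.

Definition forest_size (F : list tree) : nat := fold_right (fun c n => tsize c + n) 0 F.

Lemma tsize_Node l : tsize (Node l) = S (forest_size l).
Proof. simpl; f_equal; induction l as [|c l IH]; simpl; auto. Qed.

Lemma forest_size_cons c F : forest_size (c :: F) = tsize c + forest_size F.
Proof. reflexivity. Qed.

Lemma forest_size_app F G : forest_size (F ++ G) = forest_size F + forest_size G.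
Proof. induction F; simpl; lia. Qed.

Lemma length_le_forest_size F : length F <= forest_size F.
Proof.
  induction F as [|[l] F IH]; simpl; [lia|].
  pose proof (tsize_Node l); simpl in *; lia.
Qed.

Definition choice_size (x : list tree * list tree) : nat :=
  forest_size (fst x) + forest_size (snd x).

Lemma combine_choices_size (g : tree -> list (list tree * list tree)) l r :
  (forall c x, In c l -> In x (g c) -> choice_size x = tsize c) ->
  In r (combine_choices (map g l)) -> choice_size r = forest_size l.
Proof.
  revert r; induction l as [|c l IH]; intros r Hg Hr; simpl in Hr.
  - now destruct Hr as [<-|[]].
  - apply in_flat_map in Hr as [x [Hx Hr]].
    apply in_map_iff in Hr as [r' [<- Hr']].
    pose proof (Hg c x (or_introl eq_refl) Hx).
    pose proof (IH r' (fun c' x' Hc' => Hg c' x' (or_intror Hc')) Hr').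
    unfold choice_size in *; simpl; rewrite !forest_size_app; lia.
Qed.

Lemma length_combine_choices (g : tree -> list (list tree * list tree)) l :
  (forall c, In c l -> length (g c) <= 2 ^ tsize c) ->
  length (combine_choices (map g l)) <= 2 ^ forest_size l.
Proof.
  induction l as [|c l IH]; intros Hg; simpl; [lia|].
  rewrite (flat_map_constant_length (c := length (combine_choices (map g l))))
    by (intros x _; apply length_map).
  rewrite Nat.pow_add_r; apply Nat.mul_le_mono.
  - now apply Hg; left.
  - now apply IH; intros c' Hc'; apply Hg; right.
Qed.

Lemma ost_ne_size t p : In p (ost_ne t) -> tsize (fst p) + forest_size (snd p) = tsize t.
Proof.
  revert p; induction t as [l IHl] using tree_nested_ind; intros p Hp.
  apply in_map_iff in Hp as [r [<- Hr]].
  rewrite Forall_forall in IHl.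
  apply combine_choices_size in Hr.
  - unfold choice_size in Hr; cbn [fst snd]; rewrite !tsize_Node; lia.
  - intros c x Hc [<-|Hx]; unfold choice_size; simpl; [lia|].
    apply in_map_iff in Hx as [q [<- Hq]]; simpl.
    specialize (IHl c Hc q Hq); lia.
Qed.

Lemma ost_size t p : In p (ost t) -> tsize0 (fst p) + forest_size (snd p) = tsize t.
Proof.
  intros [<-|Hp]; [simpl; lia|].
  apply in_map_iff in Hp as [q [<- Hq]]; exact (ost_ne_size t q Hq).
Qed.

Lemma length_ost t : length (ost t) <= 2 ^ tsize t.
Proof.
  unfold ost; simpl; rewrite length_map.
  induction t as [l IHl] using tree_nested_ind.
  rewrite Forall_forall in IHl.
  rewrite tsize_Node, Nat.pow_succ_r'; simpl; rewrite length_map.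
  pose proof (Nat.pow_nonzero 2 (forest_size l)).
  enough (length (combine_choices
            (map (fun c => ([], [c]) :: map (fun q => ([fst q], snd q)) (ost_ne c)) l))
          <= 2 ^ forest_size l) by lia.
  apply length_combine_choices; intros c Hc; simpl; rewrite length_map; exact (IHl c Hc).
Qed.

Lemma partitions_size t p : In p (partitions t) -> forest_size (fst p :: snd p) = tsize t.
Proof.
  revert p; induction t as [l IHl] using tree_nested_ind; intros p Hp.
  apply in_map_iff in Hp as [r [<- Hr]].
  rewrite Forall_forall in IHl.
  apply combine_choices_size in Hr.
  - unfold choice_size in Hr; cbn [fst snd]; rewrite forest_size_cons, !tsize_Node; lia.
  - intros c x Hc Hx; apply in_flat_map in Hx as [q [Hq Hx]].
    specialize (IHl c Hc q Hq); simpl in IHl.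
    destruct Hx as [<-|[<-|[]]]; unfold choice_size; simpl; lia.
Qed.

Lemma length_partitions t : 2 * length (partitions t) <= 2 ^ tsize t.
Proof.
  induction t as [l IHl] using tree_nested_ind.
  rewrite Forall_forall in IHl.
  rewrite tsize_Node, Nat.pow_succ_r'; simpl; rewrite length_map.
  enough (length (combine_choices
            (map (fun c => flat_map (fun q => [([fst q], snd q); ([], fst q :: snd q)])
                                    (partitions c)) l))
          <= 2 ^ forest_size l) by lia.
  apply length_combine_choices; intros c Hc.
  rewrite (flat_map_constant_length (c := 2)) by reflexivity.
  specialize (IHl c Hc); lia.
Qed.

End TreeCombinatorics.

Lemma Cmod_ge0 x : 0 <= Cmod x.
Proof. exact (Complex.Cmod_ge_0 x). Qed.

Lemma Cmod_Cmul x y : Cmod (Cmul x y) = Cmod x * Cmod y.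
Proof. exact (Complex.Cmod_mult x y). Qed.

Lemma Cmod_Cadd_le x y : Cmod (Cadd x y) <= Cmod x + Cmod y.
Proof. exact (Complex.Cmod_triangle x y). Qed.

Lemma Cmod_C1 : Cmod Defs.C1 = 1.
Proof. exact Complex.Cmod_1. Qed.

Lemma Cmod_sign_pow n : Cmod (sign_pow n) = 1.
Proof. exact (eq_trans (Complex.Cmod_R _) (pow_1_abs n)). Qed.

Lemma Csub_C0 x : Csub x Defs.C0 = x.
Proof. destruct x; unfold Csub, Cadd, Copp, Defs.C0; simpl; f_equal; ring. Qed.

Lemma Cmod_Csub_diag x : Cmod (Csub x x) = 0.
Proof.
  replace (Csub x x) with Defs.C0
    by (destruct x; unfold Csub, Cadd, Copp, Defs.C0; simpl; f_equal; ring).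
  exact Complex.Cmod_0.
Qed.

Lemma Csub_Csum {A} (f g : A -> Defs.C) l :
  Csub (Csum (map f l)) (Csum (map g l)) = Csum (map (fun p => Csub (f p) (g p)) l).
Proof.
  induction l as [|p l IH]; simpl; rewrite <- ?IH;
    [|destruct (f p), (g p), (Csum (map f l)), (Csum (map g l))];
    unfold Csub, Cadd, Copp, Defs.C0; simpl; f_equal; ring.
Qed.

Lemma Cmod_Csum_le {A} (f : A -> Defs.C) l w B : 0 <= w ->
  (forall p, In p l -> Cmod (f p) * w <= B) ->
  Cmod (Csum (map f l)) * w <= INR (length l) * B.
Proof.
  intros Hw; induction l as [|p l IH]; intros Hf.
  - simpl; rewrite (Complex.Cmod_0 : Cmod Defs.C0 = 0); lra.
  - change (length (p :: l)) with (S (length l)); rewrite S_INR.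
    change (Csum (map f (p :: l))) with (Cadd (f p) (Csum (map f l))).
    pose proof (Cmod_Cadd_le (f p) (Csum (map f l))).
    pose proof (Hf p (or_introl eq_refl)).
    pose proof (IH (fun q Hq => Hf q (or_intror Hq))).
    nra.
Qed.

Lemma Cmod_Cmul_le x y w1 w2 r s :
  Cmod x * w1 <= r -> Cmod y * w2 <= s -> 0 <= w1 -> 0 <= w2 ->
  Cmod (Cmul x y) * (w1 * w2) <= r * s.
Proof.
  intros Hx Hy Hw1 Hw2.
  replace (Cmod (Cmul x y) * (w1 * w2)) with ((Cmod x * w1) * (Cmod y * w2))
    by (rewrite Cmod_Cmul; ring).
  pose proof (Cmod_ge0 x); pose proof (Cmod_ge0 y).
  apply Rmult_le_compat; auto; apply Rmult_le_pos; auto.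
Qed.

(* [x' y' - x y = (x' - x) y' + x (y' - y)] *)
Lemma Cmod_Csub_Cmul_le x' x y' y w1 w2 d r s e :
  Cmod (Csub x' x) * w1 <= d -> Cmod x * w1 <= r ->
  Cmod y' * w2 <= s -> Cmod (Csub y' y) * w2 <= e -> 0 <= w1 -> 0 <= w2 ->
  Cmod (Csub (Cmul x' y') (Cmul x y)) * (w1 * w2) <= d * s + r * e.
Proof.
  intros Hx Hx0 Hy' Hy Hw1 Hw2.
  replace (Csub (Cmul x' y') (Cmul x y)) with (Cadd (Cmul (Csub x' x) y') (Cmul x (Csub y' y)))
    by (destruct x', x, y', y; unfold Csub, Cadd, Copp, Cmul; simpl; f_equal; ring).
  pose proof (Cmod_Cmul_le _ _ _ _ _ _ Hx Hy' Hw1 Hw2).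
  pose proof (Cmod_Cmul_le _ _ _ _ _ _ Hx0 Hy Hw1 Hw2).
  pose proof (Cmod_Cadd_le (Cmul (Csub x' x) y') (Cmul x (Csub y' y))).
  assert (0 <= w1 * w2) by (apply Rmult_le_pos; auto).
  nra.
Qed.

Lemma Cmod_Csub_Cmul_l s x' x : Cmod (Csub (Cmul s x') (Cmul s x)) = Cmod s * Cmod (Csub x' x).
Proof.
  rewrite <- Cmod_Cmul; f_equal.
  destruct s, x', x; unfold Csub, Cadd, Copp, Cmul; simpl; f_equal; ring.
Qed.

Lemma INR_le_pow2 m n : (m <= 2 ^ n)%nat -> INR m <= 2 ^ n.
Proof. intros H; apply le_INR in H; rewrite pow_INR in H; exact H. Qed.

Lemma telescoping_step_le d Rad n : 1 <= Rad -> 0 <= d ->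
  d * Rad ^ n + Rad * (d * (2 * Rad) ^ n) <= d * (2 * Rad) ^ S n.
Proof.
  intros HR Hd; set (P := (2 * Rad) ^ n).
  assert (d * Rad ^ n <= d * P) by (apply Rmult_le_compat_l, pow_incr; lra).
  assert (0 <= d * P) by (apply Rmult_le_pos; [|apply pow_le]; lra).
  change ((2 * Rad) ^ S n) with (2 * Rad * P); nra.
Qed.

Lemma le_geometric_decay c q B X n : 0 <= c -> 0 <= q -> c * q <= 1 -> 0 <= B ->
  X <= B * c ^ n -> X * q ^ n <= B.
Proof.
  intros Hc Hq Hcq HB HX.
  assert ((c * q) ^ n <= 1) by (rewrite <- (pow1 n); apply pow_incr; nra).
  assert (0 <= q ^ n) by (apply pow_le; lra).
  assert (X * q ^ n <= B * (c * q) ^ n) by (rewrite Rpow_mult_distr; nra).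
  nra.
Qed.

Definition norm_le (k : nat) (a : T0 -> Defs.C) (r : R) : Prop :=
  forall t, Cmod (a t) * omega k t <= r.

Definition dist_le (k : nat) (a b : T0 -> Defs.C) (r : R) : Prop :=
  norm_le k (fun t => Csub (a t) (b t)) r.

Lemma omega_None k : omega k None = 1.
Proof. unfold omega; simpl; rewrite Nat.mul_0_r; reflexivity. Qed.

Lemma omega_ge0 k t : 0 <= omega k t.
Proof. apply pow_le; lra. Qed.

Lemma omega_add k m t : omega (k + m) t = omega k t * ((/ 2) ^ m) ^ tsize0 t.
Proof. unfold omega; rewrite Nat.mul_add_distr_r, pow_add, (pow_mult _ m); reflexivity. Qed.

Lemma omega_split k t s F : (tsize0 s + forest_size F)%nat = tsize t ->
  omega k (Some t) = omega k s * (/ 2) ^ (k * forest_size F).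
Proof.
  intros H; unfold omega; cbn [tsize0].
  rewrite <- H, Nat.mul_add_distr_l, pow_add; reflexivity.
Qed.

Lemma norm_le_ge0 k a r : norm_le k a r -> 0 <= r.
Proof.
  intros H; eapply Rle_trans; [|exact (H None)].
  apply Rmult_le_pos; [apply Cmod_ge0 | apply omega_ge0].
Qed.

Lemma dist_le_weaken k a b r s : dist_le k a b r -> r <= s -> dist_le k a b s.
Proof. intros H Hrs t; specialize (H t); simpl in H; lra. Qed.

Lemma W_norm_le k Rad a : 1 <= Rad -> W k Rad a -> norm_le k a Rad.
Proof.
  intros HR [[r [Hr Ha]] [[Ha0 _] _]] [t|].
  - specialize (Ha (Some t)); simpl in Ha; rewrite Csub_C0 in Ha; lra.
  - rewrite Ha0, Cmod_C1, omega_None; lra.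
Qed.

Lemma bmul_None a b : bmul a b None = b None.
Proof. exact (Complex.Cmult_1_r (b None)). Qed.

Lemma binv_None a : binv a None = Defs.C1.
Proof. exact (Complex.Cmult_1_r Defs.C1). Qed.

Lemma forest_eval_cons a c F : forest_eval a (c :: F) = Cmul (a (Some c)) (forest_eval a F).
Proof. reflexivity. Qed.

Lemma forest_eval_norm_le k Rad a F : norm_le k a Rad ->
  Cmod (forest_eval a F) * (/ 2) ^ (k * forest_size F) <= Rad ^ length F.
Proof.
  intros Ha; induction F as [|c F IH].
  - unfold forest_eval; simpl; rewrite Nat.mul_0_r, Cmod_C1; lra.
  - rewrite forest_eval_cons, forest_size_cons, Nat.mul_add_distr_l, pow_add.
    apply Cmod_Cmul_le;
      [exact (Ha (Some c)) | exact IH | exact (omega_ge0 k (Some c)) | apply pow_le; lra].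
Qed.

Lemma forest_eval_dist_le k Rad a a' d F : 1 <= Rad ->
  norm_le k a Rad -> norm_le k a' Rad -> dist_le k a' a d ->
  Cmod (Csub (forest_eval a' F) (forest_eval a F)) * (/ 2) ^ (k * forest_size F)
  <= d * (2 * Rad) ^ length F.
Proof.
  intros HR Ha Ha' Hd.
  pose proof (norm_le_ge0 _ _ _ Hd) as Hd0.
  induction F as [|c F IH].
  - unfold forest_eval; simpl; rewrite Cmod_Csub_diag; lra.
  - rewrite !forest_eval_cons, forest_size_cons, Nat.mul_add_distr_l, pow_add.
    eapply Rle_trans.
    { apply Cmod_Csub_Cmul_le;
        [exact (Hd (Some c)) | exact (Ha (Some c)) | apply forest_eval_norm_le, Ha'
        | exact IH | exact (omega_ge0 k (Some c)) | apply pow_le; lra]. }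
    apply telescoping_step_le; assumption.
Qed.

Section TreeEstimates.
Variables (k : nat) (Rad : R) (a b a' b' : T0 -> Defs.C) (d : R) (t : tree).
Hypotheses (HR : 1 <= Rad) (Ha : norm_le k a Rad) (Hb : norm_le k b Rad)
  (Ha' : norm_le k a' Rad)
  (Hda : dist_le k a' a d) (Hdb : dist_le k b' b d).

Lemma bmul_tree_norm_le :
  Cmod (bmul a b (Some t)) * omega k (Some t) <= Rad * (2 * Rad) ^ tsize t.
Proof.
  cbn [bmul]; eapply Rle_trans.
  - apply Cmod_Csum_le with (B := Rad ^ S (tsize t)); [apply omega_ge0|].
    intros [s F] Hp; pose proof (ost_size t _ Hp) as Hsize; cbn [fst snd] in *.
    rewrite (omega_split k t s F Hsize).
    eapply Rle_trans.
    { apply Cmod_Cmul_le; [exact (Hb s) | apply forest_eval_norm_le, Ha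
                          | apply omega_ge0 | apply pow_le; lra]. }
    change (Rad * Rad ^ length F) with (Rad ^ S (length F)); apply Rle_pow; [lra|].
    pose proof (length_le_forest_size F); simpl; lia.
  - eapply Rle_trans.
    { apply Rmult_le_compat_r; [apply pow_le; lra | apply INR_le_pow2, length_ost]. }
    right; rewrite Rpow_mult_distr; simpl; ring.
Qed.

Lemma bmul_tree_dist_le :
  Cmod (Csub (bmul a' b' (Some t)) (bmul a b (Some t))) * omega k (Some t)
  <= 2 * Rad * d * (4 * Rad) ^ tsize t.
Proof.
  pose proof (norm_le_ge0 _ _ _ Hda) as Hd.
  cbn [bmul]; rewrite Csub_Csum; eapply Rle_trans.
  - apply Cmod_Csum_le with (B := d * (2 * Rad) ^ S (tsize t)); [apply omega_ge0|].
    intros [s F] Hp; pose proof (ost_size t _ Hp) as Hsize; cbn [fst snd] in *.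
    rewrite (omega_split k t s F Hsize).
    eapply Rle_trans.
    { apply Cmod_Csub_Cmul_le;
        [exact (Hdb s) | exact (Hb s) | apply forest_eval_norm_le, Ha'
        | apply (forest_eval_dist_le k Rad a a' d); auto | apply omega_ge0 | apply pow_le; lra]. }
    eapply Rle_trans; [apply telescoping_step_le; auto|].
    apply Rmult_le_compat_l; auto; apply Rle_pow; [lra|].
    pose proof (length_le_forest_size F); simpl; lia.
  - eapply Rle_trans.
    { apply Rmult_le_compat_r; [apply Rmult_le_pos; [|apply pow_le]; lra
                               | apply INR_le_pow2, length_ost]. }
    right; replace (4 * Rad) with (2 * (2 * Rad)) by ring.
    rewrite !Rpow_mult_distr; simpl; ring.
Qed.

Lemma binv_tree_norm_le :
  Cmod (binv a (Some t)) * omega k (Some t) <= (2 * Rad) ^ tsize t.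
Proof.
  cbn [binv]; eapply Rle_trans.
  - apply Cmod_Csum_le with (B := Rad ^ tsize t); [apply omega_ge0|].
    intros [c F] Hp; pose proof (partitions_size t _ Hp) as Hsize; cbn [fst snd] in *.
    unfold omega; cbn [tsize0]; rewrite <- Hsize, Cmod_Cmul, Cmod_sign_pow, Rmult_1_l.
    eapply Rle_trans; [apply forest_eval_norm_le, Ha|].
    apply Rle_pow; [lra | apply length_le_forest_size].
  - eapply Rle_trans.
    { apply Rmult_le_compat_r; [apply pow_le; lra | apply (INR_le_pow2 _ (tsize t))].
      pose proof (length_partitions t); lia. }
    right; rewrite Rpow_mult_distr; ring.
Qed.

Lemma binv_tree_dist_le :
  Cmod (Csub (binv a' (Some t)) (binv a (Some t))) * omega k (Some t)
  <= d * (4 * Rad) ^ tsize t.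
Proof.
  pose proof (norm_le_ge0 _ _ _ Hda) as Hd.
  cbn [binv]; rewrite Csub_Csum; eapply Rle_trans.
  - apply Cmod_Csum_le with (B := d * (2 * Rad) ^ tsize t); [apply omega_ge0|].
    intros [c F] Hp; pose proof (partitions_size t _ Hp) as Hsize; cbn [fst snd] in *.
    unfold omega; cbn [tsize0]; rewrite <- Hsize, Cmod_Csub_Cmul_l, Cmod_sign_pow, Rmult_1_l.
    eapply Rle_trans; [apply (forest_eval_dist_le k Rad a a' d); auto|].
    apply Rmult_le_compat_l; auto; apply Rle_pow; [lra|].
    apply length_le_forest_size.
  - eapply Rle_trans.
    { apply Rmult_le_compat_r;
        [apply Rmult_le_pos; [|apply pow_le]; lra | apply (INR_le_pow2 _ (tsize t))].
      pose proof (length_partitions t); lia. }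
    right; replace (4 * Rad) with (2 * (2 * Rad)) by ring.
    rewrite !Rpow_mult_distr; ring.
Qed.

End TreeEstimates.

Section WeightGap.
Variables (k m : nat) (Rad : R).
Hypotheses (HR : 1 <= Rad) (Hgap : 4 * Rad * (/ 2) ^ m <= 1).

Let decay_ge0 : 0 <= (/ 2) ^ m.
Proof. apply pow_le; lra. Qed.

Lemma bmul_norm_le a b : norm_le k a Rad -> norm_le k b Rad -> norm_le (k + m) (bmul a b) Rad.
Proof.
  intros Ha Hb [t|]; pose proof decay_ge0.
  - rewrite omega_add, <- Rmult_assoc.
    apply (le_geometric_decay (2 * Rad)); try nra.
    apply bmul_tree_norm_le; auto.
  - rewrite bmul_None, omega_None; specialize (Hb None); rewrite omega_None in Hb; exact Hb.
Qed.

Lemma binv_norm_le a : norm_le k a Rad -> norm_le (k + m) (binv a) 1.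
Proof.
  intros Ha [t|]; pose proof decay_ge0.
  - rewrite omega_add, <- Rmult_assoc.
    apply (le_geometric_decay (2 * Rad)); try nra.
    rewrite Rmult_1_l; apply binv_tree_norm_le; auto.
  - rewrite binv_None, omega_None, Cmod_C1; lra.
Qed.

Lemma bmul_dist_le a b a' b' d :
  norm_le k a Rad -> norm_le k b Rad -> norm_le k a' Rad ->
  dist_le k a' a d -> dist_le k b' b d ->
  dist_le (k + m) (bmul a' b') (bmul a b) (2 * Rad * d).
Proof.
  intros Ha Hb Ha' Hda Hdb [t|]; pose proof decay_ge0; pose proof (norm_le_ge0 _ _ _ Hda).
  - rewrite omega_add, <- Rmult_assoc.
    apply (le_geometric_decay (4 * Rad)); try nra.
    apply bmul_tree_dist_le; auto.
  - specialize (Hdb None); cbv beta in *.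
    rewrite !bmul_None, omega_None in *; nra.
Qed.

Lemma binv_dist_le a a' d :
  norm_le k a Rad -> norm_le k a' Rad -> dist_le k a' a d ->
  dist_le (k + m) (binv a') (binv a) d.
Proof.
  intros Ha Ha' Hda [t|]; pose proof decay_ge0; pose proof (norm_le_ge0 _ _ _ Hda).
  - rewrite omega_add, <- Rmult_assoc.
    apply (le_geometric_decay (4 * Rad)); try nra.
    apply binv_tree_dist_le; auto.
  - cbv beta; rewrite !binv_None, Cmod_Csub_diag; lra.
Qed.

End WeightGap.

Lemma lt_powerRZ2_sub (k N : nat) (x : R) : 1 <= x ->
  x < powerRZ 2 (Z.of_nat N - Z.of_nat k) -> exists m, N = (k + m)%nat /\ x * (/ 2) ^ m < 1.
Proof.
  intros Hx H; destruct (le_lt_dec k N) as [Hle|Hlt].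
  - exists (N - k)%nat; split; [lia|].
    rewrite <- Nat2Z.inj_sub, <- pow_powerRZ in H by lia.
    assert (0 < 2 ^ (N - k)) by (apply pow_lt; lra).
    rewrite pow_inv; apply (Rmult_lt_reg_r (2 ^ (N - k))); auto.
    rewrite Rmult_assoc, Rinv_l; lra.
  - replace (Z.of_nat N - Z.of_nat k)%Z with (- Z.of_nat (k - N))%Z in H by lia.
    rewrite powerRZ_neg', <- pow_powerRZ in H.
    pose proof (pow_R1_Rle 2 (k - N) ltac:(lra)).
    assert (/ 2 ^ (k - N) <= 1) by (rewrite <- Rinv_1; apply Rinv_le_contravar; lra).
    lra.
Qed.

Theorem proposition2p3 (k : nat) (Rad : R) (N : nat) :
  1 <= Rad ->
  8 * Rad < powerRZ 2 (Z.of_nat N - Z.of_nat k)%Z ->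
  (forall a b, W k Rad a -> W k Rad b ->
     in_weighted N (bmul a b) /\ in_weighted N (binv a)) /\
  (forall a b, W k Rad a -> W k Rad b ->
     forall eps, 0 < eps -> exists delta, 0 < delta /\
       forall a' b', W k Rad a' -> W k Rad b' ->
         dist_lt k a' a delta -> dist_lt k b' b delta ->
         dist_lt N (bmul a' b') (bmul a b) eps) /\
  (forall a, W k Rad a ->
     forall eps, 0 < eps -> exists delta, 0 < delta /\
       forall a', W k Rad a' ->
         dist_lt k a' a delta ->
         dist_lt N (binv a') (binv a) eps).
Proof.
  intros HR Hlt.
  destruct (lt_powerRZ2_sub k N (8 * Rad) ltac:(lra) Hlt) as [m [-> Hm]].
  assert (Hgap : 4 * Rad * (/ 2) ^ m <= 1) by (pose proof (pow_le (/ 2) m ltac:(lra)); nra).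
  assert (HW : forall a, W k Rad a -> norm_le k a Rad) by (intros; apply W_norm_le; auto).
  split; [|split].
  - intros a b Wa Wb; split; [exists Rad | exists 1].
    + apply (bmul_norm_le k m Rad); auto.
    + apply (binv_norm_le k m Rad); auto.
  - intros a b Wa Wb eps Heps; exists (eps / (2 * Rad)); split; [apply Rdiv_lt_0_compat; lra|].
    intros a' b' Wa' Wb' [d1 [Hd1 Da]] [d2 [Hd2 Db]].
    exists (2 * Rad * Rmax d1 d2); split.
    + assert (Hmax : Rmax d1 d2 < eps / (2 * Rad)) by (apply Rmax_lub_lt; assumption).
      apply (Rmult_lt_compat_l (2 * Rad)) in Hmax; [|lra].
      replace (2 * Rad * (eps / (2 * Rad))) with eps in Hmax by (field; lra); exact Hmax.
    + apply (bmul_dist_le k m Rad); auto.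
      * apply (dist_le_weaken k a' a d1); [exact Da | apply Rmax_l].
      * apply (dist_le_weaken k b' b d2); [exact Db | apply Rmax_r].
  - intros a Wa eps Heps; exists eps; split; [exact Heps|].
    intros a' Wa' [d [Hd Da]]; exists d; split; [exact Hd|].
    apply (binv_dist_le k m Rad); auto.
Qed.
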